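(* Let $\nabla$ be a Type $\mathcal A$ connection on $\mathbb R^2$ whose Ricci tensor is non-degenerate, and let $U\subset\mathbb R^2$ be a connected open set. Then the affine Killing vector fields of $\nabla$ on $U$ are exactly the vector fields $b^1\partial_{x^1}+b^2\partial_{x^2}$ with $b^1,b^2\in\mathbb R$ constant.
   Context: A torsion-free connection has Christoffel symbols $\nabla_{\partial_{x^i}}\partial_{x^j}=\Gamma_{ij}^k\partial_{x^k}$; curvature $R(X,Y)Z=\nabla_X\nabla_YZ-\nabla_Y\nabla_XZ-\nabla_{[X,Y]}Z$, Ricci tensor $\rho(Y,Z)=\mathrm{Tr}(X\mapsto R(X,Y)Z)$. For real constants, $\Gamma(a,b,c,d,e,f)$ denotes the connection on $\mathbb R^2$ with constant Christoffel symbols $\Gamma_{11}^1=a$, $\Gamma_{11}^2=b$, $\Gamma_{12}^1=\Gamma_{21}^1=c$, $\Gamma_{12}^2=\Gamma_{21}^2=d$, $\Gamma_{22}^1=e$, $\Gamma_{22}^2=f$; these are the Type $\mathcal A$ connections. A vector field $X$ on $U$ is an affine Killing vector field if $\mathcal L_X\nabla=0$, i.e. $[X,\nabla_YZ]-\nabla_Y[X,Z]-\nabla_{[X,Y]}Z=0$ for all vector fields $Y,Z$ on $U$. *)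

From Stdlib Require Import Reals List ClassicalEpsilon.
Open Scope R_scope.

Inductive idx : Type := i1 | i2.

Definition idx_eqb (i j : idx) : bool :=
  match i, j with i1, i1 | i2, i2 => true | _, _ => false end.

Definition sum2 (g : idx -> R) : R := g i1 + g i2.

Definition pt := (R * R)%type.

Definition shift (p : pt) (d : idx) (t : R) : pt :=
  match d with
  | i1 => (fst p + t, snd p)
  | i2 => (fst p, snd p + t)
  end.

(* partial derivative d/dx^d of f at p (value 0 if it does not exist) *)
Definition pd (d : idx) (f : pt -> R) (p : pt) : R :=
  epsilon (inhabits 0) (fun l => derivable_pt_lim (fun t => f (shift p d t)) 0 l).

Definition is_open (U : pt -> Prop) : Prop :=
  forall p, U p -> exists eps, 0 < eps /\
    forall q, Rabs (fst q - fst p) < eps -> Rabs (snd q - snd p) < eps -> U q.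

Definition is_connected (U : pt -> Prop) : Prop :=
  forall V W : pt -> Prop, is_open V -> is_open W ->
    (forall p, U p -> V p \/ W p) ->
    (forall p, U p -> V p -> W p -> False) ->
    (exists p, U p /\ V p) -> (exists p, U p /\ W p) -> False.

(* f is C^infinity on U: F ds is the iterated partial derivative along the list ds
   (innermost derivative last), all of them existing and continuous on U. *)
Definition smooth_on (U : pt -> Prop) (f : pt -> R) : Prop :=
  exists F : list idx -> pt -> R,
    (forall p, U p -> F nil p = f p) /\
    (forall ds d p, U p ->
       derivable_pt_lim (fun t => F ds (shift p d t)) 0 (F (d :: ds) p)) /\
    (forall ds p, U p -> forall eps, 0 < eps -> exists delta, 0 < delta /\
       forall q, U q -> Rabs (fst q - fst p) < delta -> Rabs (snd q - snd p) < delta ->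
         Rabs (F ds q - F ds p) < eps).

(* vector fields: X k p = k-th component X^k at p *)
Definition vf := idx -> pt -> R.

Definition smooth_vf (U : pt -> Prop) (X : vf) : Prop :=
  smooth_on U (X i1) /\ smooth_on U (X i2).

(* Christoffel symbols: Gam a b c d e f i j k = Gamma_{ij}^k *)
Definition Gam (a b c d e f : R) (i j k : idx) : R :=
  match i, j, k with
  | i1, i1, i1 => a
  | i1, i1, i2 => b
  | i1, i2, i1 | i2, i1, i1 => c
  | i1, i2, i2 | i2, i1, i2 => d
  | i2, i2, i1 => e
  | i2, i2, i2 => f
  end.

Definition nabla (G : idx -> idx -> idx -> R) (Y Z : vf) : vf :=
  fun k p => sum2 (fun i => Y i p * pd i (Z k) p)
           + sum2 (fun i => sum2 (fun j => Y i p * Z j p * G i j k)).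

Definition bracket (X Y : vf) : vf :=
  fun k p => sum2 (fun i => X i p * pd i (Y k) p - Y i p * pd i (X k) p).

Definition curv (G : idx -> idx -> idx -> R) (X Y Z : vf) : vf :=
  fun k p => nabla G X (nabla G Y Z) k p - nabla G Y (nabla G X Z) k p
             - nabla G (bracket X Y) Z k p.

Definition coord (i : idx) : vf := fun k _ => if idx_eqb i k then 1 else 0.

Definition ricci (G : idx -> idx -> idx -> R) (j k : idx) (p : pt) : R :=
  sum2 (fun i => curv G (coord i) (coord j) (coord k) i p).

Definition ricci_nondegenerate (G : idx -> idx -> idx -> R) : Prop :=
  forall p, ricci G i1 i1 p * ricci G i2 i2 p - ricci G i1 i2 p * ricci G i2 i1 p <> 0.

(* X is an affine Killing vector field on U: L_X nabla = 0 on U *)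
Definition affine_killing (G : idx -> idx -> idx -> R) (U : pt -> Prop) (X : vf) : Prop :=
  smooth_vf U X /\
  forall Y Z : vf, smooth_vf U Y -> smooth_vf U Z ->
    forall k p, U p ->
      bracket X (nabla G Y Z) k p - nabla G Y (bracket X Z) k p
      - nabla G (bracket X Y) Z k p = 0.

(* With [Y = ∂_i], [Z = ∂_j] the Killing equation expresses the second derivatives of [X]
   linearly through its Jacobian [A = (∂_j X^k)]. Equality of mixed third derivatives then
   yields algebraic integrability conditions: [A] preserves the Ricci tensor [ρ], so that
   [ρ A = φ J] is skew and [det ρ · A = φ · adj(ρ) J], and the two derivatives of [A]
   prescribed by the Killing equation preserve [ρ] as well. For a Type A connection the latter say
   [φ b = φ e = φ (a - 2d) = φ (f - 2c) = 0], and if [φ ≠ 0] these force [det ρ = 0]. Hence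
   [A = 0], and [X] is constant on the connected set [U]. Conversely, a constant field commutes
   with the translation-invariant connection, by symmetry of second derivatives. *)

From Coquelicot Require Import Coquelicot.
From Stdlib Require Import Reals Lra List ClassicalEpsilon FunctionalExtensionality Classical.
Open Scope R_scope.

Lemma derivable_pt_lim_locally (f g : R -> R) x l r : 0 < r ->
  (forall t, Rabs (t - x) < r -> f t = g t) ->
  derivable_pt_lim g x l -> derivable_pt_lim f x l.
Proof.
  intros Hr Heq Hg eps He. destruct (Hg eps He) as [del Hd].
  assert (Hm : 0 < Rmin del r) by (apply Rmin_pos; [apply cond_pos | lra]).
  exists (mkposreal _ Hm). intros h Hh Hlt. simpl in Hlt.
  rewrite (Heq (x + h)), (Heq x).
  - apply Hd; auto. eapply Rlt_le_trans; [exact Hlt | apply Rmin_l].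
  - rewrite Rminus_diag, Rabs_R0; lra.
  - replace (x + h - x) with h by ring. eapply Rlt_le_trans; [exact Hlt | apply Rmin_r].
Qed.

Lemma derivable_pt_lim_shift0 (phi : R -> R) x l :
  derivable_pt_lim (fun s => phi (x + s)) 0 l -> derivable_pt_lim phi x l.
Proof.
  intros H eps He. destruct (H eps He) as [del Hd]. exists del. intros h Hh Hlt.
  specialize (Hd h Hh Hlt). rewrite Rplus_0_l, Rplus_0_r in Hd. exact Hd.
Qed.

Lemma derive0_const (phi : R -> R) h :
  (forall t, Rabs t <= Rabs h -> derivable_pt_lim phi t 0) -> phi h = phi 0.
Proof.
  intros H. destruct (Rtotal_order h 0) as [Hl | [-> | Hg]]; [| reflexivity |].
  - apply eq_is_derive; [| lra]. intros t Ht. apply is_derive_Reals, H.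
    rewrite !Rabs_left1; lra.
  - symmetry. apply eq_is_derive; [| lra]. intros t Ht. apply is_derive_Reals, H.
    rewrite !Rabs_pos_eq; lra.
Qed.

Lemma shift_0 p d : shift p d 0 = p.
Proof. destruct p, d; simpl; f_equal; ring. Qed.

Lemma is_open_shift U p d : is_open U -> U p ->
  exists r, 0 < r /\ forall t, Rabs t < r -> U (shift p d t).
Proof.
  intros HU Hp. destruct (HU p Hp) as [eps [He H]]. exists eps; split; auto.
  intros t Ht. destruct d; apply H; simpl;
    rewrite ?Rminus_diag, ?Rabs_R0; try lra;
    (replace (fst p + t - fst p) with t by ring) || (replace (snd p + t - snd p) with t by ring);
    exact Ht.
Qed.

Lemma is_open_locally_2d U (P : R -> R -> Prop) x y : is_open U -> U (x, y) ->
  (forall u v, U (u, v) -> P u v) -> locally_2d P x y.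
Proof.
  intros HU Hp HP. destruct (HU _ Hp) as [eps [He H]].
  exists (mkposreal eps He). intros u v Hu Hv. apply HP, (H (u, v)); assumption.
Qed.

Lemma pd_spec d g p l : derivable_pt_lim (fun t => g (shift p d t)) 0 l -> pd d g p = l.
Proof.
  intros H. apply (uniqueness_limite (fun t => g (shift p d t)) 0); [| exact H].
  exact (epsilon_spec (inhabits 0) _ (ex_intro _ l H)).
Qed.

Lemma pd_local U g h d p l : is_open U -> U p -> (forall q, U q -> g q = h q) ->
  derivable_pt_lim (fun t => h (shift p d t)) 0 l -> pd d g p = l.
Proof.
  intros HU Hp Heq Hh. apply pd_spec. destruct (is_open_shift U p d HU Hp) as [r [Hr Hs]].
  apply (derivable_pt_lim_locally _ (fun t => h (shift p d t)) _ _ r Hr); [| exact Hh].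
  intros t Ht. apply Heq, Hs. rewrite Rminus_0_r in Ht; exact Ht.
Qed.

Lemma derivable_pt_lim_shift_unique U g h d p l1 l2 : is_open U -> U p ->
  (forall q, U q -> g q = h q) ->
  derivable_pt_lim (fun t => g (shift p d t)) 0 l1 ->
  derivable_pt_lim (fun t => h (shift p d t)) 0 l2 -> l1 = l2.
Proof.
  intros HU Hp Heq H1 H2. rewrite <- (pd_spec d g p l1 H1). eapply pd_local; eauto.
Qed.

Lemma pd_const d (c : R) p : pd d (fun _ => c) p = 0.
Proof. apply pd_spec, derivable_pt_lim_const. Qed.

Definition partials_on (U : pt -> Prop) (F : list idx -> pt -> R) : Prop :=
  (forall ds d p, U p ->
     derivable_pt_lim (fun t => F ds (shift p d t)) 0 (F (d :: ds) p)) /\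
  (forall ds p, U p -> forall eps, 0 < eps -> exists delta, 0 < delta /\
     forall q, U q -> Rabs (fst q - fst p) < delta -> Rabs (snd q - snd p) < delta ->
       Rabs (F ds q - F ds p) < eps).

Section Partials.
Variables (U : pt -> Prop) (F : list idx -> pt -> R).
Hypothesis HU : is_open U.
Hypothesis HF : partials_on U F.

Lemma partials_derivable ds d p : U p ->
  derivable_pt_lim (fun t => F ds (shift p d t)) 0 (F (d :: ds) p).
Proof. apply HF. Qed.

Lemma partials_is_derive_1 ds u v : U (u, v) ->
  is_derive (fun z => F ds (z, v)) u (F (i1 :: ds) (u, v)).
Proof.
  intros Huv. apply is_derive_Reals, derivable_pt_lim_shift0, (partials_derivable ds i1 _ Huv).
Qed.

Lemma partials_is_derive_2 ds u v : U (u, v) ->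
  is_derive (fun z => F ds (u, z)) v (F (i2 :: ds) (u, v)).
Proof.
  intros Huv. apply is_derive_Reals, derivable_pt_lim_shift0, (partials_derivable ds i2 _ Huv).
Qed.

Lemma partials_is_derive_12 ds u v : U (u, v) ->
  is_derive (fun z => Derive (fun t => F ds (z, t)) v) u (F (i1 :: i2 :: ds) (u, v)).
Proof.
  intros Huv. destruct (is_open_shift U (u, v) i1 HU Huv) as [r [Hr Hs]].
  apply is_derive_Reals.
  apply (derivable_pt_lim_locally _ (fun z => F (i2 :: ds) (z, v)) _ _ r Hr).
  - intros z Hz. apply is_derive_unique, partials_is_derive_2.
    replace z with (u + (z - u)) by ring. exact (Hs _ Hz).
  - apply is_derive_Reals, partials_is_derive_1, Huv.
Qed.

Lemma partials_is_derive_21 ds u v : U (u, v) ->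
  is_derive (fun z => Derive (fun t => F ds (t, z)) u) v (F (i2 :: i1 :: ds) (u, v)).
Proof.
  intros Huv. destruct (is_open_shift U (u, v) i2 HU Huv) as [r [Hr Hs]].
  apply is_derive_Reals.
  apply (derivable_pt_lim_locally _ (fun z => F (i1 :: ds) (u, z)) _ _ r Hr).
  - intros z Hz. apply is_derive_unique, partials_is_derive_1.
    replace z with (v + (z - v)) by ring. exact (Hs _ Hz).
  - apply is_derive_Reals, partials_is_derive_2, Huv.
Qed.

Lemma partials_continuity_2d ds x y : U (x, y) ->
  continuity_2d_pt (fun u v => F ds (u, v)) x y.
Proof.
  intros Hp eps. destruct (proj2 HF ds (x, y) Hp eps (cond_pos eps)) as [delta [Hd Hc]].
  apply (locally_2d_impl (fun u v => U (u, v))).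
  - exists (mkposreal delta Hd). intros u v Hu Hv Huv. exact (Hc (u, v) Huv Hu Hv).
  - exact (is_open_locally_2d U _ x y HU Hp (fun u v H => H)).
Qed.

Lemma partials_swap ds p : U p -> F (i1 :: i2 :: ds) p = F (i2 :: i1 :: ds) p.
Proof.
  destruct p as [x y]. intros Hp.
  rewrite <- (is_derive_unique _ _ _ (partials_is_derive_12 ds x y Hp)),
          <- (is_derive_unique _ _ _ (partials_is_derive_21 ds x y Hp)).
  apply Schwarz.
  - apply (is_open_locally_2d U _ x y HU Hp). intros u v Huv.
    repeat split; eexists;
      [ apply partials_is_derive_1 | apply partials_is_derive_2
      | apply partials_is_derive_12 | apply partials_is_derive_21 ]; exact Huv.
  - apply (continuity_2d_pt_ext_loc (fun u v => F (i1 :: i2 :: ds) (u, v))).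
    + apply (is_open_locally_2d U _ x y HU Hp). intros u v Huv.
      symmetry. apply is_derive_unique, partials_is_derive_12, Huv.
    + apply partials_continuity_2d, Hp.
  - apply (continuity_2d_pt_ext_loc (fun u v => F (i2 :: i1 :: ds) (u, v))).
    + apply (is_open_locally_2d U _ x y HU Hp). intros u v Huv.
      symmetry. apply is_derive_unique, partials_is_derive_21, Huv.
    + apply partials_continuity_2d, Hp.
Qed.

End Partials.

Definition vf_partials (U : pt -> Prop) (X : vf) (FX : idx -> list idx -> pt -> R) : Prop :=
  forall k, (forall p, U p -> FX k nil p = X k p) /\ partials_on U (FX k).

Lemma smooth_vf_partials U X : smooth_vf U X -> exists FX, vf_partials U X FX.
Proof.
  intros [[F1 H1] [F2 H2]].
  exists (fun k => match k with i1 => F1 | i2 => F2 end). intros []; assumption.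
Qed.

Lemma vf_partials_pd U X FX : is_open U -> vf_partials U X FX ->
  forall l k q, U q -> pd l (X k) q = FX k (l :: nil) q.
Proof.
  intros HU HF l k q Hq. destruct (HF k) as [H0 H1].
  apply (pd_local U (X k) (FX k nil)); auto.
  - intros; symmetry; auto.
  - exact (partials_derivable U (FX k) H1 nil l q Hq).
Qed.

Lemma smooth_on_const U (c : R) : smooth_on U (fun _ => c).
Proof.
  exists (fun ds => match ds with nil => fun _ => c | _ => fun _ => 0 end).
  split; [reflexivity | split].
  - intros ds d p _. destruct ds; apply derivable_pt_lim_const.
  - intros ds p _ eps He. exists 1. split; [lra |]. intros.
    destruct ds; rewrite Rminus_diag, Rabs_R0; lra.
Qed.

Lemma smooth_vf_coord U i : smooth_vf U (coord i).
Proof. split; apply smooth_on_const. Qed.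

Lemma nabla_coord G i j : nabla G (coord i) (coord j) = fun k _ => G i j k.
Proof.
  extensionality k; extensionality q. unfold nabla, sum2, coord. rewrite !pd_const.
  destruct i, j; simpl; ring.
Qed.

Lemma bracket_coord i j : bracket (coord i) (coord j) = fun _ _ => 0.
Proof.
  extensionality k; extensionality q. unfold bracket, sum2, coord. rewrite !pd_const. ring.
Qed.

Lemma bracket_coord_r X j : bracket X (coord j) = fun m q => - pd j (X m) q.
Proof.
  extensionality m; extensionality q. unfold bracket, sum2, coord. rewrite !pd_const.
  destruct j; simpl; ring.
Qed.

Section ZeroPartials.
Variables (U : pt -> Prop) (g : pt -> R).
Hypothesis HU : is_open U.
Hypothesis Hg0 : forall q d, U q -> derivable_pt_lim (fun t => g (shift q d t)) 0 0.

(* [q] is joined to [p] by a horizontal and a vertical segment inside the square. *)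
Lemma zero_partials_locally_const p : U p -> exists r, 0 < r /\
  forall q, Rabs (fst q - fst p) < r -> Rabs (snd q - snd p) < r -> U q /\ g q = g p.
Proof.
  intros Hp. destruct (HU p Hp) as [eps [He Hsq]]. exists eps. split; auto.
  intros q H1 H2. split; [apply Hsq; auto |].
  destruct p as [x y], q as [u v]. simpl in *.
  assert (A1 : g (u, y) = g (x, y)).
  { pose proof (derive0_const (fun t => g (x + t, y)) (u - x)) as L. simpl in L.
    replace (x + (u - x)) with u in L by ring. rewrite Rplus_0_r in L. apply L.
    intros t Ht. apply derivable_pt_lim_shift0.
    replace (fun s => g (x + (t + s), y)) with (fun s => g (shift (x + t, y) i1 s))
      by (extensionality s; simpl; rewrite Rplus_assoc; reflexivity).
    apply Hg0, Hsq; simpl;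
      [replace (x + t - x) with t by ring | rewrite Rminus_diag, Rabs_R0]; lra. }
  assert (A2 : g (u, v) = g (u, y)).
  { pose proof (derive0_const (fun t => g (u, y + t)) (v - y)) as L. simpl in L.
    replace (y + (v - y)) with v in L by ring. rewrite Rplus_0_r in L. apply L.
    intros t Ht. apply derivable_pt_lim_shift0.
    replace (fun s => g (u, y + (t + s))) with (fun s => g (shift (u, y + t) i2 s))
      by (extensionality s; simpl; rewrite Rplus_assoc; reflexivity).
    apply Hg0, Hsq; simpl; [| replace (y + t - y) with t by ring]; lra. }
  congruence.
Qed.

Lemma zero_partials_const : is_connected U -> exists c, forall q, U q -> g q = c.
Proof.
  intros HC. destruct (classic (exists p, U p)) as [[p0 Hp0] | Hn].
  - exists (g p0). intros q Hq. apply NNPP; intro Hne.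
    apply (HC (fun q => U q /\ g q = g p0) (fun q => U q /\ g q <> g p0)).
    + intros p [Hp Heq]. destruct (zero_partials_locally_const p Hp) as [r [Hr H]].
      exists r; split; auto. intros q' h1 h2. destruct (H q' h1 h2). split; congruence.
    + intros p [Hp Heq]. destruct (zero_partials_locally_const p Hp) as [r [Hr H]].
      exists r; split; auto. intros q' h1 h2. destruct (H q' h1 h2). split; congruence.
    + intros p Hp. destruct (Req_dec (g p) (g p0)); [left | right]; split; auto.
    + intros p Hp [_ E] [_ E']. auto.
    + exists p0; auto.
    + exists q; auto.
  - exists 0. intros q Hq. exfalso. eauto.
Qed.

End ZeroPartials.

Lemma vf_partials_derivable U X FX : is_open U -> vf_partials U X FX ->
  forall k d q, U q -> derivable_pt_lim (fun t => X k (shift q d t)) 0 (FX k (d :: nil) q).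
Proof.
  intros HU HF k d q Hq. destruct (HF k) as [H0 H1].
  destruct (is_open_shift U q d HU Hq) as [r [Hr Hs]].
  apply (derivable_pt_lim_locally _ (fun t => FX k nil (shift q d t)) _ _ r Hr).
  - intros t Ht. rewrite Rminus_0_r in Ht. symmetry. apply H0, Hs, Ht.
  - exact (partials_derivable U (FX k) H1 nil d q Hq).
Qed.

(* [kill_op G i A k j] is the value of [∂_i A k j] imposed by the Killing equation for
   [Y = ∂_i], [Z = ∂_j], where [A k j] stands for [∂_j X^k]. *)
Definition kill_op (G : idx -> idx -> idx -> R) (i : idx) (A : idx -> idx -> R) (k j : idx) : R :=
  sum2 (fun l => G i j l * A k l) - sum2 (fun m => G i m k * A m j)
  - sum2 (fun m => G m j k * A m i).

Definition kill_comm (G : idx -> idx -> idx -> R) (A : idx -> idx -> R) (k j : idx) : R :=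
  kill_op G i2 (kill_op G i1 A) k j - kill_op G i1 (kill_op G i2 A) k j.

Lemma kill_op_scale G i s A :
  kill_op G i (fun k j => s * A k j) = fun k j => s * kill_op G i A k j.
Proof. extensionality k; extensionality j. unfold kill_op, sum2. ring. Qed.

Lemma kill_comm_op_scale G i s A k j :
  kill_comm G (kill_op G i (fun k j => s * A k j)) k j = s * kill_comm G (kill_op G i A) k j.
Proof. unfold kill_comm. rewrite !kill_op_scale. ring. Qed.

Lemma derivable_pt_lim_kill_op G (A : R -> idx -> idx -> R) B x :
  (forall k j, derivable_pt_lim (fun t => A t k j) x (B k j)) ->
  forall i k j, derivable_pt_lim (fun t => kill_op G i (A t) k j) x (kill_op G i B k j).
Proof.
  intros HA i k j. unfold kill_op, sum2.
  repeat first [ apply derivable_pt_lim_minus | apply derivable_pt_lim_plus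
               | apply derivable_pt_lim_scal | apply HA ].
Qed.

Definition lie (r A : idx -> idx -> R) (i j : idx) : R :=
  sum2 (fun l => r i l * A l j + A l i * r l j).

Definition det2 (r : idx -> idx -> R) : R := r i1 i1 * r i2 i2 - r i1 i2 * r i2 i1.

(* [adjJ r] is the adjugate of [r] times the rotation [J = ((0,-1),(1,0))]. *)
Definition adjJ (r : idx -> idx -> R) (k j : idx) : R :=
  match k, j with
  | i1, i1 => - r i1 i2
  | i1, i2 => - r i2 i2
  | i2, i1 => r i1 i1
  | i2, i2 => r i2 i1
  end.

(* If [A] preserves the symmetric form [r], then [r A] is skew, hence a multiple of [J]. *)
Lemma lie_zero_adjJ r A : r i1 i2 = r i2 i1 -> (forall i j, lie r A i j = 0) ->
  forall k j, det2 r * A k j = sum2 (fun l => r i2 l * A l i1) * adjJ r k j.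
Proof.
  intros Hs H k j.
  assert (H' : forall s i j, s * lie r A i j = 0) by (intros; rewrite H; ring).
  pose proof (H' (r i1 i1) i2 i2); pose proof (H' (r i1 i2) i2 i2);
  pose proof (H' (r i2 i2) i1 i1); pose proof (H' (r i1 i2) i1 i1);
  pose proof (H' (r i2 i2) i1 i2); pose proof (H' (r i1 i2) i1 i2).
  unfold lie, sum2, det2, adjJ in *. rewrite Hs in *.
  destruct k, j; lra.
Qed.

Definition ric (a b c d e f : R) (i j : idx) : R :=
  match i, j with
  | i1, i1 => a * d + b * f - b * c - d * d
  | i2, i2 => a * e + c * f - c * c - d * e
  | _, _ => c * d - b * e
  end.

Lemma ricci_Gam a b c d e f j k p : ricci (Gam a b c d e f) j k p = ric a b c d e f j k.
Proof.
  unfold ricci, curv, sum2. rewrite !nabla_coord, !bracket_coord.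
  unfold nabla, sum2, coord. rewrite !pd_const.
  destruct j, k; simpl; ring.
Qed.

(* The integrability condition of the Killing equation: [A] preserves the Ricci tensor. *)
Lemma kill_comm_Gam a b c d e f A j :
  kill_comm (Gam a b c d e f) A i1 j = - lie (ric a b c d e f) A i2 j /\
  kill_comm (Gam a b c d e f) A i2 j = lie (ric a b c d e f) A i1 j.
Proof. unfold kill_comm, kill_op, lie, sum2, ric, Gam. destruct j; split; ring. Qed.

Lemma kill_comm_adjJ a b c d e f :
  let G := Gam a b c d e f in let r := ric a b c d e f in
  kill_comm G (kill_op G i1 (adjJ r)) i2 i1 = (- 6 * b) * det2 r /\
  kill_comm G (kill_op G i1 (adjJ r)) i2 i2 = (2 * a - 4 * d) * det2 r /\
  kill_comm G (kill_op G i1 (adjJ r)) i1 i2 = (2 * f - 4 * c) * det2 r /\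
  kill_comm G (kill_op G i2 (adjJ r)) i1 i2 = (- 6 * e) * det2 r.
Proof. unfold kill_comm, kill_op, sum2, adjJ, det2, ric, Gam; simpl. repeat split; ring. Qed.

Lemma kill_comm_zero_Gam a b c d e f (A : idx -> idx -> R) :
  det2 (ric a b c d e f) <> 0 ->
  (forall k j, kill_comm (Gam a b c d e f) A k j = 0) ->
  (forall i k j, kill_comm (Gam a b c d e f) (kill_op (Gam a b c d e f) i A) k j = 0) ->
  forall k j, A k j = 0.
Proof.
  intros Hdet H0 H1.
  assert (Hlie : forall i j, lie (ric a b c d e f) A i j = 0).
  { intros [] j; destruct (kill_comm_Gam a b c d e f A j) as [E1 E2].
    - rewrite <- E2. apply H0.
    - rewrite <- (Ropp_involutive (lie _ A i2 j)), <- E1, H0. ring. }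
  destruct (kill_comm_adjJ a b c d e f) as [E1 [E2 [E3 E4]]].
  set (G := Gam a b c d e f) in *. set (r := ric a b c d e f) in *.
  set (phi := sum2 (fun l => r i2 l * A l i1)).
  assert (HA : (fun k j => det2 r * A k j) = (fun k j => phi * adjJ r k j)).
  { extensionality k; extensionality j. apply lie_zero_adjJ; [reflexivity | exact Hlie]. }
  assert (Hphi : phi = 0).
  { destruct (Req_dec phi 0) as [| Hne]; [assumption | exfalso].
    (* [phi * adjJ r = det2 r * A], and the entries for [A] vanish by linearity. *)
    assert (Hcancel : forall i k j x,
      kill_comm G (kill_op G i (adjJ r)) k j = x * det2 r -> x = 0).
    { intros i k j x Hx. apply (Rmult_eq_reg_l (phi * det2 r));
        [| apply Rmult_integral_contrapositive; split; assumption].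
      rewrite Rmult_0_r, Rmult_assoc, (Rmult_comm (det2 r)), <- Hx, <- kill_comm_op_scale, <- HA,
        kill_comm_op_scale, H1. ring. }
    apply Hcancel in E1, E2, E3, E4.
    apply Hdet. unfold r, det2, ric.
    replace b with 0 by lra. replace e with 0 by lra. replace a with (2 * d) by lra.
    replace f with (2 * c) by lra. ring. }
  intros k j. apply (Rmult_eq_reg_l (det2 r)); [| exact Hdet].
  rewrite Rmult_0_r. change (det2 r * A k j) with ((fun k j => det2 r * A k j) k j).
  rewrite HA, Hphi. ring.
Qed.

Definition jacobian (FX : idx -> list idx -> pt -> R) (p : pt) (k l : idx) : R :=
  FX k (l :: nil) p.

Section Killing.
Variables (G : idx -> idx -> idx -> R) (U : pt -> Prop) (X : vf)
  (FX : idx -> list idx -> pt -> R).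
Hypothesis HU : is_open U.
Hypothesis HF : vf_partials U X FX.
Hypothesis HK : affine_killing G U X.

Lemma killing_second_partials i j k p : U p ->
  FX k (i :: j :: nil) p = kill_op G i (jacobian FX p) k j.
Proof.
  intros Hp.
  assert (Hpd2 : forall i j k, pd i (fun q => - pd j (X k) q) p = - FX k (i :: j :: nil) p).
  { intros i' j' k'. destruct (HF k') as [_ H1].
    apply (pd_local U _ (fun q => - FX k' (j' :: nil) q)); auto.
    - intros q Hq. rewrite (vf_partials_pd U X FX HU HF); auto.
    - apply derivable_pt_lim_opp, (partials_derivable U _ H1), Hp. }
  pose proof (proj2 HK (coord i) (coord j) (smooth_vf_coord U i) (smooth_vf_coord U j) k p Hp)
    as H.
  rewrite nabla_coord, !bracket_coord_r in H. unfold bracket, nabla, sum2, coord in H.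
  rewrite !Hpd2, !(vf_partials_pd U X FX HU HF _ _ p Hp), !pd_const in H.
  unfold kill_op, jacobian, sum2. destruct i, j, k; simpl in H; lra.
Qed.

Lemma killing_third_partials d i j k p : U p ->
  FX k (d :: i :: j :: nil) p = kill_op G i (kill_op G d (jacobian FX p)) k j.
Proof.
  intros Hp.
  replace (kill_op G d (jacobian FX p)) with (fun k' j' => FX k' (d :: j' :: nil) p)
    by (extensionality k'; extensionality j'; apply killing_second_partials, Hp).
  apply (derivable_pt_lim_shift_unique U (FX k (i :: j :: nil))
           (fun q => kill_op G i (jacobian FX q) k j) d p); auto.
  - intros q Hq. apply killing_second_partials, Hq.
  - apply (partials_derivable U _ (proj2 (HF k))), Hp.
  - apply (derivable_pt_lim_kill_op G (fun t => jacobian FX (shift p d t))).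
    intros k' j'. apply (partials_derivable U _ (proj2 (HF k'))), Hp.
Qed.

Lemma kill_comm_jacobian p k j : U p -> kill_comm G (jacobian FX p) k j = 0.
Proof.
  intros Hp. unfold kill_comm. rewrite <- !killing_third_partials by exact Hp.
  rewrite (partials_swap U (FX k) HU (proj2 (HF k)) (j :: nil) p Hp). ring.
Qed.

Lemma kill_comm_kill_op_jacobian d p k j : U p ->
  kill_comm G (kill_op G d (jacobian FX p)) k j = 0.
Proof.
  intros Hp.
  replace (kill_op G d (jacobian FX p)) with (fun k' j' => FX k' (d :: j' :: nil) p)
    by (extensionality k'; extensionality j'; apply killing_second_partials, Hp).
  apply (derivable_pt_lim_shift_unique U (fun q => kill_comm G (jacobian FX q) k j)
           (fun _ => 0) d p); auto.
  - intros q Hq. apply kill_comm_jacobian, Hq.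
  - unfold kill_comm. apply derivable_pt_lim_minus;
      apply derivable_pt_lim_kill_op, derivable_pt_lim_kill_op;
      intros k' j'; apply (partials_derivable U _ (proj2 (HF k'))), Hp.
  - apply derivable_pt_lim_const.
Qed.

End Killing.

Lemma affine_killing_jacobian_zero a b c d e f U X FX :
  ricci_nondegenerate (Gam a b c d e f) -> is_open U -> vf_partials U X FX ->
  affine_killing (Gam a b c d e f) U X -> forall q k l, U q -> FX k (l :: nil) q = 0.
Proof.
  intros Hnd HU HF HK q k l Hq.
  apply (kill_comm_zero_Gam a b c d e f (jacobian FX q)).
  - specialize (Hnd q). rewrite !ricci_Gam in Hnd. exact Hnd.
  - intros; apply (kill_comm_jacobian _ U X FX); auto.
  - intros; apply (kill_comm_kill_op_jacobian _ U X FX); auto.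
Qed.

Section ConstantFields.
Variables (G : idx -> idx -> idx -> R) (U : pt -> Prop) (X Y Z : vf)
  (FY FZ : idx -> list idx -> pt -> R) (p : pt).
Hypothesis HU : is_open U.
Hypothesis HFY : vf_partials U Y FY.
Hypothesis HFZ : vf_partials U Z FZ.
Hypothesis Hp : U p.
Hypothesis HX : forall l q, U q -> X l q = X l p.

Lemma pd_const_field l m q : U q -> pd l (X m) q = 0.
Proof.
  intros Hq. apply (pd_local U (X m) (fun _ => X m p)); auto. apply derivable_pt_lim_const.
Qed.

Lemma pd_nabla l m : pd l (nabla G Y Z m) p =
  sum2 (fun i => FY i (l :: nil) p * FZ m (i :: nil) p + FY i nil p * FZ m (l :: i :: nil) p)
  + sum2 (fun i => sum2 (fun j =>
      (FY i (l :: nil) p * FZ j nil p + FY i nil p * FZ j (l :: nil) p) * G i j m)).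
Proof.
  apply (pd_local U _ (fun q => sum2 (fun i => FY i nil q * FZ m (i :: nil) q)
     + sum2 (fun i => sum2 (fun j => FY i nil q * FZ j nil q * G i j m)))); auto.
  - intros q Hq. unfold nabla, sum2.
    rewrite !(vf_partials_pd U Z FZ HU HFZ _ _ q Hq), !(proj1 (HFY _) q Hq),
      !(proj1 (HFZ _) q Hq). reflexivity.
  - assert (DY : forall m ds,
        derivable_pt_lim (fun t => FY m ds (shift p l t)) 0 (FY m (l :: ds) p))
      by (intros; apply (partials_derivable U _ (proj2 (HFY _))), Hp).
    assert (DZ : forall m ds,
        derivable_pt_lim (fun t => FZ m ds (shift p l t)) 0 (FZ m (l :: ds) p))
      by (intros; apply (partials_derivable U _ (proj2 (HFZ _))), Hp).
    evar (L : R). replace (sum2 _ + _) with L; unfold L, sum2.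
    + repeat first [ apply derivable_pt_lim_plus | apply derivable_pt_lim_mult | apply DY
                   | apply DZ | apply derivable_pt_lim_const ].
    + cbv beta. rewrite !shift_0. ring.
Qed.

Lemma pd_bracket_const i m :
  pd i (bracket X Z m) p = sum2 (fun l => X l p * FZ m (i :: l :: nil) p).
Proof.
  apply (pd_local U _ (fun q => sum2 (fun l => X l p * FZ m (l :: nil) q))); auto.
  - intros q Hq. unfold bracket, sum2.
    rewrite !(vf_partials_pd U Z FZ HU HFZ _ _ q Hq), !(pd_const_field _ _ q Hq), !(HX _ q Hq).
    ring.
  - unfold sum2. apply derivable_pt_lim_plus; apply derivable_pt_lim_scal;
      apply (partials_derivable U _ (proj2 (HFZ m))), Hp.
Qed.

Lemma bracket_const W FW m : vf_partials U W FW ->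
  bracket X W m p = sum2 (fun l => X l p * FW m (l :: nil) p).
Proof.
  intros HFW. unfold bracket, sum2.
  rewrite !(vf_partials_pd U W FW HU HFW _ _ p Hp), !(pd_const_field _ _ p Hp). ring.
Qed.

Lemma killing_eq_const k :
  bracket X (nabla G Y Z) k p - nabla G Y (bracket X Z) k p - nabla G (bracket X Y) Z k p = 0.
Proof.
  assert (T : bracket X (nabla G Y Z) k p = sum2 (fun l => X l p * pd l (nabla G Y Z k) p))
    by (unfold bracket, sum2; rewrite !(pd_const_field _ _ p Hp); ring).
  rewrite T. unfold sum2 at 1. rewrite !pd_nabla. unfold nabla, sum2.
  rewrite !pd_bracket_const, !(bracket_const Y FY), !(bracket_const Z FZ) by assumption.
  rewrite !(vf_partials_pd U Z FZ HU HFZ _ _ p Hp), <- !(proj1 (HFY _) p Hp),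
    <- !(proj1 (HFZ _) p Hp).
  unfold sum2. rewrite !(partials_swap U (FZ _) HU (proj2 (HFZ _)) nil p Hp). ring.
Qed.

End ConstantFields.

Lemma const_affine_killing G U X : is_open U -> smooth_vf U X ->
  (exists b1 b2 : R, forall p, U p -> X i1 p = b1 /\ X i2 p = b2) ->
  affine_killing G U X.
Proof.
  intros HU HX [b1 [b2 Hb]]. split; [exact HX |].
  intros Y Z HY HZ k p Hp.
  destruct (smooth_vf_partials U Y HY) as [FY HFY].
  destruct (smooth_vf_partials U Z HZ) as [FZ HFZ].
  apply (killing_eq_const G U X Y Z FY FZ p HU HFY HFZ Hp).
  intros l q Hq. destruct (Hb q Hq), (Hb p Hp). destruct l; congruence.
Qed.

Theorem mainTheorem14 (a b c d e f : R) (U : pt -> Prop) :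
  ricci_nondegenerate (Gam a b c d e f) ->
  is_open U -> is_connected U ->
  forall X : vf,
    affine_killing (Gam a b c d e f) U X <->
    (smooth_vf U X /\
     exists b1 b2 : R, forall p, U p -> X i1 p = b1 /\ X i2 p = b2).
Proof.
  intros Hnd HU HC X. split.
  - intros HK. split; [exact (proj1 HK) |].
    destruct (smooth_vf_partials U X (proj1 HK)) as [FX HF].
    assert (H0 : forall k q d, U q -> derivable_pt_lim (fun t => X k (shift q d t)) 0 0).
    { intros k q d' Hq. pose proof (vf_partials_derivable U X FX HU HF k d' q Hq) as D.
      rewrite (affine_killing_jacobian_zero a b c d e f U X FX Hnd HU HF HK q k d' Hq) in D.
      exact D. }
    destruct (zero_partials_const U (X i1) HU (H0 i1) HC) as [b1 Hb1].
    destruct (zero_partials_const U (X i2) HU (H0 i2) HC) as [b2 Hb2].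
    exists b1, b2. auto.
  - intros [HX Hb]. exact (const_affine_killing _ U X HU HX Hb).
Qed.
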